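(* Let $\mathbb{Z}$ be a finite-dimensional Euclidean space, $L>0$, and let $G:\mathbb{Z}\to\mathbb{Z}$ be $\frac{1}{L}$-co-coercive. Assume there exists $z^*\in\mathbb{Z}$ with $G(z^* )=0$. Let $z^0\in\mathbb{Z}$, let $\gamma_k\ge 0$ ($k\ge0$), and let $\{z^k\}$ be generated by the inexact Halpern iteration: for $k\ge 0$, choose any $\tilde z^k\in\mathbb{Z}$ with $\|G(z^k)-\tilde z^k\|\le\gamma_k$ and set $z^{k+1}=\beta_k z^0+(1-\beta_k)z^k-\eta_k\tilde z^k$, where $\beta_k=1/(k+2)$ and $\eta_k=(1-\beta_k)/L$. Then for every solution $z^*$ with $G(z^* )=0$ and all $k\ge0$, \[ \|G(z^k)\|^2\le \frac{\Big(7L\|z^0-z^*\|+10\sqrt{\sum_{i=0}^{k-1}(i+1)^2\gamma_i^2}\Big)^2}{(k+1)(k+2)}, \qquad \|z^{k+1}-z^k\|^2\le \frac{8\Big(7L\|z^0-z^*\|+11\sqrt{\sum_{i=0}^{k}(i+1)^2\gamma_i^2}\Big)^2}{L^2(k+1)(k+2)}. \] (An empty sum equals $0$.)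
   Context: A map $G:\mathbb{Z}\to\mathbb{Z}$ is $c$-co-coercive ($c>0$) if $\langle G(x_1)-G(x_2),x_1-x_2\rangle\ge c\|G(x_1)-G(x_2)\|^2$ for all $x_1,x_2$. $\|\cdot\|$ is the Euclidean norm. *)

From mathcomp Require Import all_boot all_order all_algebra.
From mathcomp Require Import reals.
Set Implicit Arguments. Unset Strict Implicit. Unset Printing Implicit Defensive.
Import Order.TTheory GRing.Theory Num.Theory.
Local Open Scope ring_scope.

Definition dotv (R : realType) (n : nat) (u v : 'rV[R]_n) : R :=
  \sum_(i < n) u ord0 i * v ord0 i.

Definition enorm (R : realType) (n : nat) (u : 'rV[R]_n) : R :=
  Num.sqrt (dotv u u).

Definition cocoercive (R : realType) (n : nat) (c : R) (G : 'rV[R]_n -> 'rV[R]_n) : Prop :=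
  forall x1 x2 : 'rV[R]_n,
    dotv (G x1 - G x2) (x1 - x2) >= c * enorm (G x1 - G x2) ^+ 2.

From mathcomp Require Import all_boot all_order all_algebra.
From mathcomp Require Import reals.
From mathcomp Require Import ring lra.
Import Order.TTheory GRing.Theory Num.Theory.
Local Open Scope ring_scope.

Set Implicit Arguments. Unset Strict Implicit. Unset Printing Implicit Defensive.

(* Rescaling by 1/L reduces everything to a 1-co-coercive T = G/L with errors
   e_k = zt_k/L - T z_k of size at most eps_k = gamma_k/L.  The potential
   P_k = (k+1) <T z_k, z_k - z_0> + k(k+1)/2 |T z_k|^2 grows at each step by at
   most the error terms (co-coercivity between consecutive iterates), while
   co-coercivity at the zero z* and Cauchy-Schwarz bound it below by
   (k+1)(k+2)/2 |T z_k|^2 - (k+1) |T z_k| |z_0 - z*|.  The step estimate follows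
   from (k+2)(z_{k+1} - z_k) = (z_0 - z_k) - (k+1)(T z_k + e_k), together with
   |z_k - z*| <= |z_0 - z*| + sum_{i<k} eps_i (I - T is nonexpansive) and
   sum_i eps_i <= 2 sqrt(sum_i (i+1)^2 eps_i^2) (Cauchy-Schwarz and
   sum 1/(i+1)^2 <= 2). *)

Section InnerProduct.
Variables (R : realType) (n : nat).
Implicit Types (u v w : 'rV[R]_n) (a : R).

Lemma dotvC u v : dotv u v = dotv v u.
Proof. by apply: eq_bigr => i _; rewrite mulrC. Qed.

Lemma dotvDl u v w : dotv (u + v) w = dotv u w + dotv v w.
Proof. by rewrite /dotv -big_split; apply: eq_bigr => i _; rewrite mxE mulrDl. Qed.

Lemma dotvZl a u w : dotv (a *: u) w = a * dotv u w.
Proof. by rewrite /dotv mulr_sumr; apply: eq_bigr => i _; rewrite mxE mulrA. Qed.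

Lemma dotvNl u w : dotv (- u) w = - dotv u w.
Proof. by rewrite -scaleN1r dotvZl mulN1r. Qed.

Lemma dotvBl u v w : dotv (u - v) w = dotv u w - dotv v w.
Proof. by rewrite dotvDl dotvNl. Qed.

Lemma dotvDr u v w : dotv w (u + v) = dotv w u + dotv w v.
Proof. by rewrite dotvC dotvDl !(dotvC w). Qed.

Lemma dotvZr a u w : dotv w (a *: u) = a * dotv w u.
Proof. by rewrite dotvC dotvZl dotvC. Qed.

Lemma dotvNr u w : dotv w (- u) = - dotv w u.
Proof. by rewrite dotvC dotvNl dotvC. Qed.

Lemma dotvBr u v w : dotv w (u - v) = dotv w u - dotv w v.
Proof. by rewrite dotvDr dotvNr. Qed.

Lemma dotv0l w : dotv 0 w = 0.
Proof. by rewrite -(scale0r 0) dotvZl mul0r. Qed.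

Lemma dotv0r w : dotv w 0 = 0.
Proof. by rewrite dotvC dotv0l. Qed.

Definition dotvE :=
  (dotvDl, dotvBl, dotvZl, dotvNl, dotvDr, dotvBr, dotvZr, dotvNr).

Lemma dotvv_ge0 u : 0 <= dotv u u.
Proof. by apply: sumr_ge0 => i _; rewrite -expr2 sqr_ge0. Qed.

Lemma dotvv_eq0 u : (dotv u u == 0) = (u == 0).
Proof.
apply/eqP/eqP => [uu0|->]; last exact: dotv0l.
apply/rowP => i; rewrite mxE; apply/eqP; rewrite -[_ == 0]orbb -mulf_eq0; apply/eqP.
by move/psumr_eq0P: uu0 => -> // j _; rewrite -expr2 sqr_ge0.
Qed.

Lemma enorm_ge0 u : 0 <= enorm u.
Proof. exact: sqrtr_ge0. Qed.

Lemma enorm_sqr u : enorm u ^+ 2 = dotv u u.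
Proof. by rewrite sqr_sqrtr // dotvv_ge0. Qed.

Lemma enormZ a u : enorm (a *: u) = `|a| * enorm u.
Proof. by rewrite /enorm dotvZl dotvZr mulrA -expr2 sqrtrM ?sqr_ge0 // sqrtr_sqr. Qed.

Lemma enormN u : enorm (- u) = enorm u.
Proof. by rewrite -scaleN1r enormZ normrN1 mul1r. Qed.

Lemma enorm_distC u v : enorm (u - v) = enorm (v - u).
Proof. by rewrite -enormN opprB. Qed.

Lemma cauchy_schwarz u v : dotv u v <= enorm u * enorm v.
Proof.
have [->|u0] := eqVneq u 0; first by rewrite dotv0l mulr_ge0 ?enorm_ge0.
have [->|v0] := eqVneq v 0; first by rewrite dotv0r mulr_ge0 ?enorm_ge0.
have enorm_gt0 w : w != 0 -> 0 < enorm w by rewrite sqrtr_gt0 lt0r dotvv_eq0 dotvv_ge0 => ->.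
have := dotvv_ge0 (enorm v *: u - enorm u *: v).
rewrite !dotvE -!enorm_sqr (dotvC v u).
have := mulr_gt0 (enorm_gt0 _ u0) (enorm_gt0 _ v0); nra.
Qed.

Lemma ler_enormD u v : enorm (u + v) <= enorm u + enorm v.
Proof.
rewrite -(ler_pXn2r (_ : 0 < 2)%N) ?nnegrE ?addr_ge0 ?enorm_ge0 //.
rewrite enorm_sqr !dotvE (dotvC v u) -!enorm_sqr.
have := cauchy_schwarz u v; lra.
Qed.

End InnerProduct.

Lemma cocoercive1_id_sub_lipschitz (R : realType) (n : nat) (T : 'rV[R]_n -> 'rV[R]_n) :
  cocoercive 1 T -> forall x y, enorm ((x - T x) - (y - T y)) <= enorm (x - y).
Proof.
move=> coco x y; have := coco x y; rewrite mul1r.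
have -> : (x - T x) - (y - T y) = (x - y) - (T x - T y).
  by apply/rowP => i; rewrite !mxE; ring.
move: (x - y) (T x - T y) => d t; rewrite enorm_sqr => dt.
rewrite -(ler_pXn2r (_ : 0 < 2)%N) ?nnegrE ?enorm_ge0 // !enorm_sqr dotvBl !dotvBr.
rewrite (dotvC d t); have := dotvv_ge0 t; lra.
Qed.

(* The right side minus the left side equals p(p+1) times the co-coercivity slack
   plus p(p+1)/2 |a - b + e|^2. *)
Lemma halpern_potential_step (R : realType) (n : nat) (p : R) (a b u w e : 'rV[R]_n) :
  0 <= p -> (p + 1) *: w = p *: (u - b - e) ->
  enorm (a - b) ^+ 2 <= dotv (a - b) (w - u) ->
  (p + 1) * dotv a w + p * (p + 1) / 2 * enorm a ^+ 2
  <= p * dotv b u + (p - 1) * p / 2 * enorm b ^+ 2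
     + p * (p + 1) / 2 * enorm e ^+ 2 - p * dotv b e.
Proof.
move=> p0 hw coco.
have hwc c : (p + 1) * dotv c w = p * dotv c (u - b - e) by rewrite -!dotvZr hw.
have pp1 : 0 <= p * (p + 1) by rewrite mulr_ge0 ?addr_ge0.
have := ler_wpM2l pp1 coco; have := mulr_ge0 pp1 (dotvv_ge0 (a - b + e)).
have := congr1 ( *%R p) (hwc b); have := congr1 ( *%R p) (hwc a); have := hwc a.
rewrite /= !enorm_sqr !dotvE.
rewrite (dotvC b a) (dotvC e a) (dotvC e b).
lra.
Qed.

Lemma sum_inv_sqr_le (R : realType) (k : nat) :
  \sum_(i < k) ((i.+1%:R : R) ^+ 2)^-1 <= 2.
Proof.
pose f i : R := - 2 / i.+1%:R.
have telescope i : ((i.+1%:R : R) ^+ 2)^-1 <= f i.+1 - f i.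
  rewrite -subr_ge0 (_ : _ - _ = i%:R / (i.+1%:R ^+ 2 * i.+2%:R)).
    by rewrite divr_ge0 ?mulr_ge0 ?sqr_ge0.
  rewrite /f; field; have := ler0n R i.
  by move=> i0; apply/andP; split; apply: lt0r_neq0; lra.
apply: le_trans (ler_sum _ (fun (i : 'I_k) _ => telescope i)) _.
rewrite -(big_mkord xpredT (fun i => f i.+1 - f i)) telescope_sumr //.
by rewrite /f !mulNr opprK divr1 gerDr oppr_le0 divr_ge0.
Qed.

Lemma sum_le_weighted_sqrt (R : realType) (k : nat) (g : nat -> R) :
  \sum_(i < k) g i <= 2 * Num.sqrt (\sum_(i < k) i.+1%:R ^+ 2 * g i ^+ 2).
Proof.
pose a : 'rV[R]_k := \row_(i < k) (i.+1%:R)^-1.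
pose b : 'rV[R]_k := \row_(i < k) (i.+1%:R * g i).
have -> : \sum_(i < k) g i = dotv a b.
  by apply: eq_bigr => i _; rewrite !mxE mulKf ?pnatr_eq0.
have -> : Num.sqrt (\sum_(i < k) i.+1%:R ^+ 2 * g i ^+ 2) = enorm b.
  by congr Num.sqrt; apply: eq_bigr => i _; rewrite !mxE -exprMn -expr2.
have a_le2 : enorm a <= 2.
  rewrite /enorm -[leRHS]ger0_norm // -sqrtr_sqr ler_sqrt ?sqr_ge0 //.
  rewrite (_ : dotv a a = \sum_(i < k) ((i.+1%:R : R) ^+ 2)^-1).
    by apply: le_trans (sum_inv_sqr_le R k) _; lra.
  by apply: eq_bigr => i _; rewrite !mxE -exprVn -expr2.
by apply: le_trans (cauchy_schwarz a b) _; rewrite ler_wpM2r ?enorm_ge0.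
Qed.

Lemma le_sqr_7D_10S (R : realType) (y W D S : R) :
  0 <= y -> 0 <= D -> 0 <= S -> y ^+ 2 <= W ->
  W / 2 - y * D <= S ^+ 2 + 2 * (7 * D + 10 * S) * S ->
  W <= (7 * D + 10 * S) ^+ 2.
Proof.
set Q := 7 * D + 10 * S => y0 D0 S0 yW hW.
(* t |-> t^2/2 - t D is increasing for t >= D, and Q is large enough that its
   value at Q exceeds S^2 + 2 Q S: this forces y <= Q. *)
have Q_big : 2 * Q * D + 2 * S ^+ 2 + 4 * Q * S <= Q ^+ 2 by rewrite /Q; nra.
have QD : 2 * D <= Q by rewrite /Q; lra.
have y_le : y <= Q.
  rewrite leNgt; apply/negP => Qy.
  have : 0 < (y - Q) * (y + Q - 2 * D) by apply: mulr_gt0; lra.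
  nra.
nra.
Qed.

Lemma le_of_natSS_mul_sqr (R : realType) (k : nat) (x Q : R) :
  0 <= x -> 0 <= Q -> k.+1%:R * k.+2%:R * x ^+ 2 <= Q ^+ 2 -> k.+1%:R * x <= Q.
Proof.
move=> x0 Q0 h; rewrite -(ler_pXn2r (_ : 0 < 2)%N) ?nnegrE ?mulr_ge0 //.
apply: le_trans h; rewrite exprMn ler_wpM2r ?sqr_ge0 // expr2 ler_wpM2l //.
by rewrite ler_nat.
Qed.

Section HalpernIteration.
Variables (R : realType) (n : nat) (T : 'rV[R]_n -> 'rV[R]_n).
Variables (z e : nat -> 'rV[R]_n) (eps : nat -> R) (zs : 'rV[R]_n).
Hypothesis T_cocoercive : cocoercive 1 T.
Hypothesis T_zs : T zs = 0.
Hypothesis e_le : forall k, enorm (e k) <= eps k.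
Hypothesis z_succ : forall k, z k.+1 =
  (k.+2%:R)^-1 *: z 0%N + (1 - (k.+2%:R)^-1) *: (z k - T (z k) - e k).

Let D := enorm (z 0%N - zs).
Let S k := Num.sqrt (\sum_(i < k) i.+1%:R ^+ 2 * eps i ^+ 2).
Let r k := enorm (T (z k)).

Definition potential k :=
  k.+1%:R * dotv (T (z k)) (z k - z 0%N) + k%:R * k.+1%:R / 2 * r k ^+ 2.

Let eps_ge0 k : 0 <= eps k.
Proof. exact: le_trans (enorm_ge0 _) (e_le k). Qed.

Lemma z_succ_sub0 k :
  k.+2%:R *: (z k.+1 - z 0%N) = k.+1%:R *: (z k - z 0%N - T (z k) - e k).
Proof. by rewrite z_succ; apply/rowP => j; rewrite !mxE; field; rewrite -natrD pnatr_eq0. Qed.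

Lemma z_succ_sub k :
  k.+2%:R *: (z k.+1 - z k) = (z 0%N - z k) - k.+1%:R *: (T (z k) + e k).
Proof. by rewrite z_succ; apply/rowP => j; rewrite !mxE; field; rewrite -natrD pnatr_eq0. Qed.

Lemma potential0 : potential 0 = 0.
Proof. by rewrite /potential subrr dotv0r mulr0 !mul0r addr0. Qed.

Lemma potential_succ k : potential k.+1 <=
  potential k + k.+1%:R * k.+2%:R / 2 * eps k ^+ 2 + k.+1%:R * r k * eps k.
Proof.
have step := @halpern_potential_step _ _ k.+1%:R (T (z k.+1)) (T (z k))
  (z k - z 0%N) (z k.+1 - z 0%N) (e k) (ler0n _ _).
have coco := T_cocoercive (z k.+1) (z k).
have zdiff : z k.+1 - z k = (z k.+1 - z 0%N) - (z k - z 0%N).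
  by rewrite opprB addrA subrK.
rewrite mul1r zdiff in coco.
have := step _ coco; rewrite natr1 -z_succ_sub0 => /(_ erefl).
have e_sqr : enorm (e k) ^+ 2 <= eps k ^+ 2 by rewrite ler_pXn2r ?nnegrE ?enorm_ge0.
have be : - dotv (T (z k)) (e k) <= r k * eps k.
  rewrite -dotvNr; apply: le_trans (cauchy_schwarz _ _) _.
  by rewrite enormN ler_wpM2l ?enorm_ge0.
have c0 : 0 <= k.+1%:R * k.+2%:R / 2 :> R by rewrite divr_ge0 ?mulr_ge0.
have := ler_wpM2l c0 e_sqr; have := ler_wpM2l (ler0n R k.+1) be.
rewrite /potential /r; lra.
Qed.

Lemma potential_ge k :
  k.+1%:R * k.+2%:R / 2 * r k ^+ 2 - k.+1%:R * r k * D <= potential k.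
Proof.
have coco := T_cocoercive (z k) zs; rewrite T_zs !subr0 mul1r in coco.
have zs_z0 : dotv (T (z k)) (z 0%N - zs) <= r k * D by exact: cauchy_schwarz.
rewrite /potential (_ : z k - z 0%N = (z k - zs) - (z 0%N - zs)).
  rewrite dotvBr /r.
  have := ler_wpM2l (ler0n R k.+1) coco; have := ler_wpM2l (ler0n R k.+1) zs_z0.
  rewrite /r; lra.
by rewrite opprB addrA subrK.
Qed.

Lemma potential_le_sum k : potential k <=
  \sum_(i < k) (i.+1%:R * i.+2%:R / 2 * eps i ^+ 2 + i.+1%:R * r i * eps i).
Proof.
elim: k => [|k IH]; first by rewrite potential0 big_ord0.
apply: le_trans (potential_succ k) _.
by rewrite -addrA big_ord_recr lerD2r.
Qed.

Let weighted_sum_ge0 k : 0 <= \sum_(i < k) i.+1%:R ^+ 2 * eps i ^+ 2 :> R.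
Proof. by rewrite sumr_ge0 // => i _; rewrite mulr_ge0 ?sqr_ge0. Qed.

Lemma S_ge0 k : 0 <= S k.
Proof. exact: sqrtr_ge0. Qed.

Lemma S_le k m : (k <= m)%N -> S k <= S m.
Proof.
apply: (homo_leq (@lexx _ _) le_trans) => {}k.
by rewrite ler_sqrt // big_ord_recr /= lerDl mulr_ge0 ?sqr_ge0.
Qed.

Lemma eps_le_S k : k.+1%:R * eps k <= S k.+1.
Proof.
rewrite -[leLHS]ger0_norm ?mulr_ge0 ?eps_ge0 // -sqrtr_sqr ler_sqrt //.
by rewrite big_ord_recr /= exprMn lerDr weighted_sum_ge0.
Qed.

Lemma residual_bound k : k.+1%:R * k.+2%:R * r k ^+ 2 <= (7 * D + 10 * S k) ^+ 2.
Proof.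
elim/ltn_ind: k => k IH.
have D0 : 0 <= D by exact: enorm_ge0.
set Q := 7 * D + 10 * S k.
have Q0 : 0 <= Q by rewrite /Q addr_ge0 ?mulr_ge0 ?S_ge0.
have r_le (i : 'I_k) : i.+1%:R * r i <= Q.
  apply: le_trans (_ : 7 * D + 10 * S i <= Q).
    by apply: le_of_natSS_mul_sqr; rewrite ?enorm_ge0 ?addr_ge0 ?mulr_ge0 ?S_ge0 ?IH.
  by rewrite lerD2l ler_wpM2l // S_le // ltnW.
have sum_le : \sum_(i < k) (i.+1%:R * i.+2%:R / 2 * eps i ^+ 2 + i.+1%:R * r i * eps i)
    <= S k ^+ 2 + 2 * Q * S k.
  rewrite big_split /= sqr_sqrtr //; apply: lerD.
    apply: ler_sum => i _; rewrite ler_wpM2r ?sqr_ge0 //.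
    have := ler0n R i; nra.
  rewrite -mulrA; apply: le_trans (_ : Q * \sum_(i < k) eps i <= _).
    by rewrite mulr_sumr ler_sum // => i _; rewrite ler_wpM2r.
  by rewrite mulrCA ler_wpM2l // sum_le_weighted_sqrt.
rewrite /Q; apply: (le_sqr_7D_10S (y := k.+1%:R * r k)); rewrite ?mulr_ge0 ?enorm_ge0 ?S_ge0 //.
  by rewrite exprMn ler_wpM2r ?sqr_ge0 // expr2 ler_wpM2l // ler_nat.
have := le_trans (potential_ge k) (le_trans (potential_le_sum k) sum_le).
rewrite -/Q; lra.
Qed.

Lemma dist_to_zero_le k : enorm (z k - zs) <= D + \sum_(i < k) eps i.
Proof.
elim: k => [|k IH]; first by rewrite big_ord0 addr0.
set b := (k.+2%:R : R)^-1.
have b0 : 0 <= b by rewrite invr_ge0.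
have b1 : b <= 1 by rewrite invf_le1 ?ler1n.
have -> : z k.+1 - zs =
    b *: (z 0%N - zs) + (1 - b) *: ((z k - T (z k)) - (zs - T zs)) - (1 - b) *: e k.
  by rewrite T_zs subr0 z_succ; apply/rowP => j; rewrite !mxE /b; ring.
apply: le_trans (ler_enormD _ _) _; rewrite enormN.
apply: le_trans (lerD (ler_enormD _ _) (lexx _)) _.
rewrite !enormZ !ger0_norm ?subr_ge0 // big_ord_recr /=.
have b'0 : 0 <= 1 - b by rewrite subr_ge0.
have sum0 : 0 <= \sum_(i < k) eps i by rewrite sumr_ge0.
have := ler_wpM2l b'0 (le_trans (cocoercive1_id_sub_lipschitz T_cocoercive (z k) zs) IH).
have := ler_wpM2l b'0 (e_le k); have := mulr_ge0 b0 (addr_ge0 sum0 (eps_ge0 k)).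
rewrite /D; lra.
Qed.

Lemma step_bound k :
  k.+1%:R * k.+2%:R * enorm (z k.+1 - z k) ^+ 2 <= 8 * (7 * D + 11 * S k.+1) ^+ 2.
Proof.
have D0 : 0 <= D by exact: enorm_ge0.
have S0 := S_ge0 k.+1.
have scaled : k.+2%:R * enorm (z k.+1 - z k) <= enorm (z 0%N - z k) + k.+1%:R * (r k + eps k).
  rewrite -[k.+2%:R]ger0_norm // -enormZ z_succ_sub.
  apply: le_trans (ler_enormD _ _) _; rewrite enormN enormZ ger0_norm // lerD2l ler_wpM2l //.
  by apply: le_trans (ler_enormD _ _) _; rewrite lerD2l e_le.
have z0_zk : enorm (z 0%N - z k) <= 2 * D + 2 * S k.+1.
  rewrite (_ : z 0%N - z k = (z 0%N - zs) - (z k - zs)); last by rewrite opprB addrA subrK.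
  apply: le_trans (ler_enormD _ _) _; rewrite enormN.
  have := le_trans (sum_le_weighted_sqrt k eps) (ler_wpM2l _ (S_le (leqnSn k))).
  have := dist_to_zero_le k; rewrite /S /D; lra.
have rk : k.+1%:R * r k <= 7 * D + 10 * S k.+1.
  have Q0 : 0 <= 7 * D + 10 * S k by rewrite addr_ge0 ?mulr_ge0 ?S_ge0.
  apply: le_trans (le_of_natSS_mul_sqr (enorm_ge0 _) Q0 (residual_bound k)) _.
  by rewrite lerD2l ler_wpM2l // S_le.
have := eps_le_S k; rewrite mulrDr in scaled => ek.
have kd_le : k.+2%:R * enorm (z k.+1 - z k) <= 9 * D + 13 * S k.+1 by lra.
apply: le_trans (_ : (k.+2%:R * enorm (z k.+1 - z k)) ^+ 2 <= _).
  by rewrite exprMn ler_wpM2r ?sqr_ge0 // expr2 ler_wpM2r // ler_nat.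
apply: le_trans (_ : (9 * D + 13 * S k.+1) ^+ 2 <= _).
  have kd0 : 0 <= k.+2%:R * enorm (z k.+1 - z k) by rewrite mulr_ge0 ?enorm_ge0.
  by rewrite ler_pXn2r ?nnegrE //; lra.
have := mulr_ge0 D0 S0; nra.
Qed.

End HalpernIteration.

Theorem theorem1 (R : realType) (n : nat) (L : R) (G : 'rV[R]_n -> 'rV[R]_n)
  (z zt : nat -> 'rV[R]_n) (gamma : nat -> R) :
  0 < L ->
  cocoercive L^-1 G ->
  (exists zs : 'rV[R]_n, G zs = 0) ->
  (forall k, 0 <= gamma k) ->
  (forall k, enorm (G (z k) - zt k) <= gamma k) ->
  (forall k, z k.+1 =
      (k.+2%:R)^-1 *: z 0%N + (1 - (k.+2%:R)^-1) *: z k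
      - ((1 - (k.+2%:R)^-1) / L) *: zt k) ->
  forall zs : 'rV[R]_n, G zs = 0 ->
  forall k : nat,
    enorm (G (z k)) ^+ 2 <=
      (7 * L * enorm (z 0%N - zs)
       + 10 * Num.sqrt (\sum_(i < k) (i.+1%:R) ^+ 2 * gamma i ^+ 2)) ^+ 2
      / (k.+1%:R * k.+2%:R)
    /\
    enorm (z k.+1 - z k) ^+ 2 <=
      8 * (7 * L * enorm (z 0%N - zs)
       + 11 * Num.sqrt (\sum_(i < k.+1) (i.+1%:R) ^+ 2 * gamma i ^+ 2)) ^+ 2
      / (L ^+ 2 * k.+1%:R * k.+2%:R).
Proof.
move=> L0 G_coco _ _ zt_le z_rec zs G_zs k.
have Li0 : 0 <= L^-1 by rewrite invr_ge0 ltW.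
pose T x := L^-1 *: G x.
pose e i := L^-1 *: zt i - T (z i).
pose eps i := gamma i / L.
have T_coco : cocoercive 1 T.
  move=> x y; rewrite /T -scalerBr dotvZl enormZ ger0_norm // exprMn mul1r.
  by rewrite expr2 -!mulrA ler_wpM2l.
have T_zs : T zs = 0 by rewrite /T G_zs scaler0.
have e_le i : enorm (e i) <= eps i.
  by rewrite /e /T -scalerBr enormZ ger0_norm // enorm_distC mulrC ler_wpM2r.
have z_succ i : z i.+1 =
    (i.+2%:R)^-1 *: z 0%N + (1 - (i.+2%:R)^-1) *: (z i - T (z i) - e i).
  by rewrite z_rec; apply/rowP => j; rewrite !mxE; ring.
have S_eps m : Num.sqrt (\sum_(i < m) i.+1%:R ^+ 2 * gamma i ^+ 2)
    = L * Num.sqrt (\sum_(i < m) i.+1%:R ^+ 2 * eps i ^+ 2).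
  rewrite -[L in RHS]gtr0_norm // -sqrtr_sqr -sqrtrM ?sqr_ge0 // mulr_sumr.
  by congr Num.sqrt; apply: eq_bigr => i _; rewrite /eps; field; rewrite lt0r_neq0.
have G_T x : enorm (G x) = L * enorm (T x).
  by rewrite /T enormZ ger0_norm // mulrA divff ?mul1r ?lt0r_neq0.
have := residual_bound T_coco T_zs e_le z_succ k.
have := step_bound T_coco T_zs e_le z_succ k.
rewrite /= !S_eps G_T.
move: (enorm (z 0%N - zs)) (Num.sqrt _) (Num.sqrt _) (enorm (T (z k))) => D s s' r step res.
have L2 := sqr_ge0 L.
have := ler_wpM2l L2 step; have := ler_wpM2l L2 res.
split; rewrite ler_pdivlMr ?mulr_gt0 ?exprn_gt0 //; lra.
Qed.
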